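(* Let $\ell_1,\ell_2\in\mathbb{N}$ and let $D$ be a digraph with $\delta^+(D)\ge\ell_1+\ell_2$. Then for every $v\in V(D)$ there are directed paths $P_1,P_2$ in $D$ of lengths $\ell_1$ and $\ell_2$ respectively, both starting at $v$, with $V(P_1)\cap V(P_2)=\{v\}$.
   Context: Digraphs are finite, loopless, without parallel arcs (digons allowed). $\delta^+(D)$ is the minimum out-degree; the length of a path is its number of arcs. *)

From mathcomp Require Import all_boot.
Set Implicit Arguments.
Unset Strict Implicit.
Unset Printing Implicit Defensive.

(* A digraph: finite vertex type V with arc relation E; looplessness is
   the hypothesis irreflexive E.  A relation has no parallel arcs; digons
   (E u v and E v u) are allowed. *)

Definition outdeg (V : finType) (E : rel V) (v : V) : nat := #|[set w | E v w]|.

Definition min_outdeg_ge (V : finType) (E : rel V) (k : nat) : Prop :=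
  forall v : V, k <= outdeg E v.

(* A directed path starting at v with vertex sequence v :: p: consecutive
   vertices joined by arcs, all vertices distinct.  Its length (number of
   arcs) is size p. *)
Definition dipath (V : finType) (E : rel V) (v : V) (p : seq V) : bool :=
  path E v p && uniq (v :: p).

Definition pverts (V : finType) (v : V) (p : seq V) : {set V} := [set x in v :: p].

From mathcomp Require Import all_boot.

Set Implicit Arguments.
Unset Strict Implicit.
Unset Printing Implicit Defensive.

(* Grow a path greedily from v, forbidding a set S of vertices together with
   the vertices already used.  The number of arcs still to be added plus the
   number of forbidden vertices never increases, so while it is at most the
   minimum out-degree the current endpoint has an allowed out-neighbour.
   Taking S empty gives P2; taking S = V(P2) - v then gives P1. *)

Section GreedyPath.

Variables (V : finType) (E : rel V).

Lemma outarc_notin (S : {set V}) (v : V) :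
  #|S| < outdeg E v -> exists2 w, E v w & w \notin S.
Proof.
move=> ltS; have /set0Pn[w]: [set w | E v w] :\: S != set0.
  by apply: contraTneq ltS => /eqP; rewrite setD_eq0 -leqNgt => /subset_leq_card.
by rewrite in_setD inE => /andP[wS Evw]; exists w.
Qed.

Lemma dipath_cons (v w : V) (p : seq V) :
  dipath E v (w :: p) = [&& E v w, v \notin w :: p & dipath E w p].
Proof. by rewrite /dipath /= -!andbA; congr (_ && _); rewrite andbCA. Qed.

Variable k : nat.
Hypotheses (E_irr : irreflexive E) (E_deg : min_outdeg_ge E k).

Lemma dipath_avoiding (n : nat) (v : V) (S : {set V}) :
  v \notin S -> n + #|S| <= k ->
  exists p, [/\ dipath E v p, size p = n & [disjoint p & S]].
Proof.
elim: n v S => [|n IHn] v S vS lenk.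
  by exists [::]; split; rewrite /dipath /= ?disjoint_has.
have [w Evw wS]: exists2 w, E v w & w \notin S.
  apply: outarc_notin; apply: leq_trans (E_deg v); apply: leq_trans lenk.
  by rewrite addSn ltnS leq_addl.
have vw : v != w by apply: contraTneq Evw => <-; rewrite E_irr.
have wvS : w \notin v |: S by rewrite in_setU1 eq_sym (negbTE vw).
have [|p [pathp sizep disp]] := IHn w (v |: S) wvS.
  by rewrite cardsU1 vS add1n -addSnnS.
exists (w :: p); split.
- rewrite dipath_cons Evw pathp in_cons negb_or vw /= andbT.
  by apply/negP => /(disjointFr disp); rewrite setU11.
- by rewrite /= sizep.
- by rewrite disjoint_cons wS (disjointWr (subsetUr [set v] S) disp).
Qed.

End GreedyPath.

Lemma pvertsI_disjoint (V : finType) (v : V) (p1 p2 : seq V) :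
  [disjoint p1 & p2] -> pverts v p1 :&: pverts v p2 = [set v].
Proof.
move=> dis; apply/setP => x; rewrite !inE.
by case: eqP => //= _; apply/negP => /andP[/(disjointFr dis) ->].
Qed.

Theorem lemma3p1 (l1 l2 : nat) (V : finType) (E : rel V) :
  irreflexive E ->
  min_outdeg_ge E (l1 + l2) ->
  forall v : V, exists p1 p2 : seq V,
    [/\ dipath E v p1, size p1 = l1,
        dipath E v p2, size p2 = l2 &
        pverts v p1 :&: pverts v p2 = [set v]].
Proof.
move=> irrE degE v.
have [|p2 [path2 size2 _]] := dipath_avoiding irrE degE (n := l2) (negbT (in_set0 v)).
  by rewrite cards0 addn0 leq_addl.
have vp2 : v \notin [set x in p2] by rewrite inE; case/andP: path2 => _ /andP[].
have [|p1 [path1 size1 dis]] := dipath_avoiding irrE degE (n := l1) vp2.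
  by rewrite leq_add2l -size2 cardsE card_size.
exists p1, p2; split => //; apply: pvertsI_disjoint.
by rewrite -(@eq_disjoint_r _ [set x in p2]) // => x; rewrite inE.
Qed.
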